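(* Let $\Gamma$ be a symmetric bimatrix game with common pure strategy set $C_1=\{1,\dots,m\}$. Then the set $\mathrm{XE}_{\mathrm{sym}}(\Gamma)$ of exchangeable equilibria of $\Gamma$ is compact, convex, and semialgebraic.
   Context: A symmetric bimatrix game: two players with the same finite strategy set $C_1$ ($m=|C_1|\ge2$) and utilities $u_1,u_2:C_1\times C_1\to\mathbb{R}$ with $u_1(s_1,s_2)=u_2(s_2,s_1)$. Distributions on $C_1\times C_1$ are identified with $m\times m$ nonnegative matrices summing to one. A distribution $\pi$ is a correlated equilibrium if for each player $i$ and all $s_i,t_i\in C_1$, $\sum_{s_{-i}}[u_i(t_i,s_{-i})-u_i(s)]\pi(s)\le 0$; $\mathrm{CE}(\Gamma)$ denotes the set of correlated equilibria. An exchangeable equilibrium is a correlated equilibrium in which the players' actions are conditionally i.i.d.; equivalently $\mathrm{XE}_{\mathrm{sym}}(\Gamma)=\mathrm{CE}(\Gamma)\cap\mathrm{conv}\{xx^T: x\text{ a probability vector on }C_1\}$. *)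

From HB Require Import structures.
From mathcomp Require Import all_boot all_order all_algebra.
From mathcomp Require Import all_classical all_reals all_analysis.
Set Implicit Arguments. Unset Strict Implicit. Unset Printing Implicit Defensive.
Import Order.TTheory GRing.Theory Num.Theory.
Import numFieldNormedType.Exports.
Local Open Scope ring_scope.
Local Open Scope classical_set_scope.

(* Strategy set C1 = 'I_m; utilities u1 u2 : 'I_m -> 'I_m -> R.
   A distribution on C1 x C1 is an m x m matrix. *)

Definition symmetric_game (R : realType) (m : nat)
    (u1 u2 : 'I_m -> 'I_m -> R) : Prop :=
  forall s1 s2, u1 s1 s2 = u2 s2 s1.

Definition is_distribution (R : realType) (m : nat) (pi : 'M[R]_(m, m)) : Prop :=
  (forall i j, 0 <= pi i j) /\ \sum_(i < m) \sum_(j < m) pi i j = 1.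

Definition is_prob_vector (R : realType) (m : nat) (x : 'cV[R]_m) : Prop :=
  (forall i, 0 <= x i ord0) /\ \sum_(i < m) x i ord0 = 1.

Definition correlated_equilibrium (R : realType) (m : nat)
    (u1 u2 : 'I_m -> 'I_m -> R) (pi : 'M[R]_(m, m)) : Prop :=
  is_distribution pi /\
  (forall s1 t1 : 'I_m,
      \sum_(s2 < m) (u1 t1 s2 - u1 s1 s2) * pi s1 s2 <= 0) /\
  (forall s2 t2 : 'I_m,
      \sum_(s1 < m) (u2 s1 t2 - u2 s1 s2) * pi s1 s2 <= 0).

Definition CE (R : realType) (m : nat) (u1 u2 : 'I_m -> 'I_m -> R)
  : set 'M[R]_(m, m) := [set pi | correlated_equilibrium u1 u2 pi].

Definition conv_prod_dists (R : realType) (m : nat) : set 'M[R]_(m, m) :=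
  [set pi | exists (k : nat) (w : 'I_k -> R) (x : 'I_k -> 'cV[R]_m),
      (forall l, 0 <= w l) /\ \sum_(l < k) w l = 1 /\
      (forall l, is_prob_vector (x l)) /\
      pi = \sum_(l < k) w l *: (x l *m (x l)^T)].

Definition XE_sym (R : realType) (m : nat) (u1 u2 : 'I_m -> 'I_m -> R)
  : set 'M[R]_(m, m) := CE u1 u2 `&` @conv_prod_dists R m.

Inductive rpoly (R : Type) (I : Type) : Type :=
| PConst of R
| PVar of I
| PAdd of rpoly R I & rpoly R I
| PMul of rpoly R I & rpoly R I.

Fixpoint rpoly_eval (R : realType) (I : Type) (p : rpoly R I) (v : I -> R) : R :=
  match p with
  | PConst c => c
  | PVar i => v i
  | PAdd p q => rpoly_eval p v + rpoly_eval q v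
  | PMul p q => rpoly_eval p v * rpoly_eval q v
  end.

Inductive sa_formula (R : Type) (I : Type) : Type :=
| SAeq0 of rpoly R I
| SAgt0 of rpoly R I
| SAnot of sa_formula R I
| SAand of sa_formula R I & sa_formula R I
| SAor of sa_formula R I & sa_formula R I.

Fixpoint sa_holds (R : realType) (I : Type) (f : sa_formula R I) (v : I -> R) : Prop :=
  match f with
  | SAeq0 p => rpoly_eval p v = 0
  | SAgt0 p => 0 < rpoly_eval p v
  | SAnot g => ~ sa_holds g v
  | SAand g h => sa_holds g v /\ sa_holds h v
  | SAor g h => sa_holds g v \/ sa_holds h v
  end.

Definition semialgebraic (R : realType) (m n : nat) (S : set 'M[R]_(m, n)) : Prop :=
  exists f : sa_formula R ('I_m * 'I_n),
    S = [set M | sa_holds f (fun ij => M ij.1 ij.2)].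

From HB Require Import structures.
From mathcomp Require Import all_boot all_order all_algebra.
From mathcomp Require Import all_classical all_reals all_analysis.
From mathcomp Require Import ordered_qelim qe_rcf.
Import Order.TTheory GRing.Theory Num.Theory.
Import numFieldNormedType.Exports.
Set Implicit Arguments. Unset Strict Implicit. Unset Printing Implicit Defensive.
Local Open Scope ring_scope.
Local Open Scope classical_set_scope.

(* Convexity is immediate: the correlated-equilibrium constraints are linear,
   and a convex combination of two mixtures of product distributions is again
   one.  For the other two properties the key is Caratheodory's theorem: every
   point of conv{x x^T} is a mixture of m^2 + 1 product distributions x x^T.
   Hence conv{x x^T} is the continuous image of the compact set of weights and
   probability vectors indexed by 'I_(m^2 + 1), and XE is compact, being its
   intersection with the closed set CE.  The same bound expresses membership in
   XE by a first-order formula of ordered fields with finitely many existential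
   quantifiers, which quantifier elimination for real closed fields turns into
   a quantifier-free one, i.e. XE is semialgebraic. *)

(** * Caratheodory's theorem in matrix spaces *)

Section Caratheodory.
Variables (R : realType) (m n : nat).

Lemma affinely_dependent_mx k (P : 'I_k -> 'M[R]_(m, n)) :
  ((m * n).+1 < k)%N -> exists2 c : 'I_k -> R, exists l, c l != 0 &
    \sum_l c l = 0 /\ \sum_l c l *: P l = 0.
Proof.
move=> ltk.
pose A : 'M[R]_(k, 1 + m * n) := \matrix_l row_mx 1 (mxvec (P l)).
have rowA l : row l A = row_mx 1 (mxvec (P l)) by rewrite rowK.
have [c cA0 c_nz] : exists2 c : 'rV_k, c *m A = 0 & c != 0.
  have : kermx A != 0.
    rewrite kermx_eq0 /row_free; apply: contraL ltk => /eqP rkA.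
    by rewrite -leqNgt -add1n -{1}rkA rank_leq_col.
  by case/rowV0Pn => c /sub_kermxP; exists c.
rewrite mulmx_sum_row in cA0.
exists (c 0).
  apply/existsP; apply: contraNT c_nz => /existsPn c0.
  by apply/eqP/rowP => j; rewrite mxE; apply/eqP/negPn/c0.
split.
- have := congr1 (fun M : 'rV_(1 + m * n) => M 0 (lshift (m * n) (0 : 'I_1))) cA0.
  rewrite summxE mxE => csum; rewrite -[RHS]csum.
  by apply: eq_bigr => j _; rewrite rowA mxE row_mxEl mxE eqxx mulr1.
- have := congr1 (@rsubmx _ 1 1 _) cA0; rewrite linear_sum linear0 => c0P.
  apply/eqP; rewrite -mxvec_eq0 linear_sum -[X in _ == X]c0P; apply/eqP/eq_bigr => j _.
  by rewrite rowA scale_row_mx /= row_mxKr linearZ.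
Qed.

Lemma caratheodory_step k (w : 'I_k.+1 -> R) (P : 'I_k.+1 -> 'M[R]_(m, n)) :
  ((m * n).+1 < k.+1)%N -> (forall l, 0 <= w l) -> \sum_l w l = 1 ->
  exists (l0 : 'I_k.+1) (w' : 'I_k -> R), [/\ forall l, 0 <= w' l, \sum_l w' l = 1 &
    \sum_l w' l *: P (lift l0 l) = \sum_l w l *: P l].
Proof.
move=> ltk w_ge0 w_sum1.
have [c [l2 cl2_neq0] [c_sum0 cP0]] := affinely_dependent_mx P ltk.
have [l1 cl1_gt0] : exists l, 0 < c l.
  apply/not_existsP => c_le0; move/negP: cl2_neq0; apply.
  have Nc_ge0 l : 0 <= - c l by rewrite oppr_ge0 leNgt; apply/negP/c_le0.
  rewrite -oppr_eq0; apply/eqP/(psumr_eq0P (P := predT) (fun l _ => Nc_ge0 l)) => //.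
  by rewrite sumrN c_sum0 oppr0.
(* Move along the affine dependence until the first weight vanishes. *)
have [l0 cl0_gt0 l0_min] :=
  arg_minP (fun l => w l / c l) (P := fun l => 0 < c l) cl1_gt0.
pose t := w l0 / c l0.
pose w' l := w l - t * c l.
have w'_ge0 l : 0 <= w' l.
  rewrite subr_ge0; have [cl_gt0|cl_le0] := ltP 0 (c l).
    by rewrite -ler_pdivlMr //; exact: l0_min.
  by apply: le_trans (w_ge0 l); rewrite mulr_ge0_le0 // divr_ge0 // ltW.
have w'l0 : w' l0 = 0 by rewrite /w' /t divfK ?subrr // gt_eqF.
have w'_sum1 : \sum_l w' l = 1 by rewrite sumrB -mulr_sumr c_sum0 mulr0 subr0.
have w'P : \sum_l w' l *: P l = \sum_l w l *: P l.
  under eq_bigr do rewrite scalerBl -scalerA.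
  by rewrite sumrB -scaler_sumr cP0 scaler0 subr0.
exists l0, (w' \o lift l0); split=> [l|//|].
- exact: w'_ge0.
- by rewrite -w'_sum1 (bigD1_ord l0) //= w'l0 add0r.
- by rewrite -w'P (bigD1_ord l0) //= w'l0 scale0r add0r.
Qed.

Lemma sum_widen_ord (V : nmodType) k N (F : 'I_k.+1 -> V) : (k < N)%N ->
  \sum_(l < N) (if (l < k.+1)%N then F (inord l) else 0) = \sum_l F l.
Proof.
move=> ltkN; rewrite -big_mkcond /= -(big_ord_widen _ (F \o inord) ltkN).
by apply: eq_bigr => l _; rewrite /= inord_val.
Qed.

Lemma caratheodory_mx k (w : 'I_k -> R) (P : 'I_k -> 'M[R]_(m, n)) :
  (forall l, 0 <= w l) -> \sum_l w l = 1 ->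
  exists (f : 'I_(m * n).+1 -> 'I_k) (w' : 'I_(m * n).+1 -> R),
    [/\ forall l, 0 <= w' l, \sum_l w' l = 1 &
        \sum_l w' l *: P (f l) = \sum_l w l *: P l].
Proof.
elim: k w P => [|k IH] w P w_ge0 w_sum1.
  by move: w_sum1; rewrite big_ord0 => /eqP; rewrite eq_sym oner_eq0.
have [lek|ltk] := leqP k.+1 (m * n).+1.
  exists inord, (fun l => if (l < k.+1)%N then w (inord l) else 0).
  split=> [l||]; first by case: ifP.
    by rewrite sum_widen_ord.
  rewrite -(sum_widen_ord _ lek); apply: eq_bigr => l _.
  by case: ifP; rewrite ?scale0r.
have [l0 [w' [w'_ge0 w'_sum1 w'P]]] := caratheodory_step P ltk w_ge0 w_sum1.
have [f [w'' [w''_ge0 w''_sum1 w''P]]] := IH w' (P \o lift l0) w'_ge0 w'_sum1.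
by exists (lift l0 \o f), w''; split; rewrite // w''P.
Qed.

End Caratheodory.

Section ProductDistributions.
Variables (R : realType) (m : nat).

Definition is_prod_dists_comb k (w : 'I_k -> R) (x : 'I_k -> 'cV[R]_m)
    (M : 'M[R]_m) : Prop :=
  (forall l, 0 <= w l) /\ \sum_l w l = 1 /\ (forall l, is_prob_vector (x l)) /\
  M = \sum_l w l *: (x l *m (x l)^T).

Lemma conv_prod_distsP M : conv_prod_dists M <->
  exists w x, @is_prod_dists_comb (m * m).+1 w x M.
Proof.
split=> [[k [w [x [w_ge0 [w_sum1 [x_prob ->]]]]]]|[w [x Mwx]]]; last by exists _, w, x.
have [f [w' [w'_ge0 w'_sum1 w'P]]] :=
  caratheodory_mx (fun l => x l *m (x l)^T) w_ge0 w_sum1.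
by exists w', (x \o f); do 2!split=> //; split=> // l; exact: x_prob.
Qed.

End ProductDistributions.

(** * Convexity *)

Lemma convex_setI (R : numDomainType) (E : lmodType R) (A B : set (convex_lmodType E)) :
  convex_set A -> convex_set B -> convex_set (A `&` B).
Proof.
move=> cA cB x y l /set_mem[Ax Bx] /set_mem[Ay By]; apply/mem_set.
by split; apply/set_mem; [apply: cA|apply: cB]; apply/mem_set.
Qed.

Section MatrixConvexity.
Variables (R : realType) (m n : nat).
Implicit Types (x y : 'M[R]_(m, n)) (l : {i01 R}).

Lemma convmxE x y l :
  (conv l (x : convex_lmodType _) y : 'M[R]_(m, n)) =
  l%:num *: x + (1 - l%:num) *: y.
Proof. by []. Qed.

Lemma sum_convmxE (I : Type) (r : seq I) (c : I -> R) (i : I -> 'I_m) (j : I -> 'I_n)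
    x y l :
  \sum_(z <- r) c z * (conv l (x : convex_lmodType _) y : 'M[R]_(m, n)) (i z) (j z) =
  l%:num * \sum_(z <- r) c z * x (i z) (j z) +
  (1 - l%:num) * \sum_(z <- r) c z * y (i z) (j z).
Proof.
rewrite !mulr_sumr -big_split; apply: eq_bigr => z _.
by rewrite convmxE !mxE mulrDr (mulrCA (c z)) (mulrCA (c z)).
Qed.

End MatrixConvexity.

Section ExchangeableConvexity.
Variables (R : realType) (m : nat).

Lemma convex_CE u1 u2 :
  convex_set (CE u1 u2 : set (convex_lmodType 'M[R]_(m, m))).
Proof.
move=> x y l /set_mem[[x_ge0 x_sum1] [x_ce1 x_ce2]].
move=> /set_mem[[y_ge0 y_sum1] [y_ce1 y_ce2]]; apply/mem_set.
have l_ge0 : 0 <= l%:num by [].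
have l'_ge0 : 0 <= 1 - l%:num by rewrite subr_ge0.
have conv_le0 a b : a <= 0 -> b <= 0 -> l%:num * a + (1 - l%:num) * b <= 0.
  by move=> a_le0 b_le0; rewrite -[0]addr0 lerD // mulr_ge0_le0.
split; [split|split].
- by move=> i j; rewrite convmxE !mxE addr_ge0 // mulr_ge0.
- have sum_pairs (M : 'M[R]_m) : \sum_i \sum_j M i j = \sum_(p : 'I_m * 'I_m) 1 * M p.1 p.2.
    by rewrite pair_bigA; apply: eq_bigr => p _; rewrite mul1r.
  by rewrite !sum_pairs sum_convmxE -!sum_pairs x_sum1 y_sum1 !mulr1 subrKC.
- by move=> s t; rewrite sum_convmxE conv_le0.
- by move=> s t; rewrite sum_convmxE conv_le0.
Qed.

Lemma convex_conv_prod_dists :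
  convex_set (@conv_prod_dists R m : set (convex_lmodType 'M[R]_(m, m))).
Proof.
move=> X Y l /set_mem[k1 [w1 [x1 [w1_ge0 [w1_sum1 [x1_prob ->]]]]]].
move=> /set_mem[k2 [w2 [x2 [w2_ge0 [w2_sum1 [x2_prob ->]]]]]]; apply/mem_set.
have l_ge0 : 0 <= l%:num by [].
have l'_ge0 : 0 <= 1 - l%:num by rewrite subr_ge0.
pose w z := match fintype.split z with
  | inl i => l%:num * w1 i | inr j => (1 - l%:num) * w2 j end.
pose x z := match fintype.split z with inl i => x1 i | inr j => x2 j end.
have split_l i : fintype.split (lshift k2 i) = inl i := unsplitK (inl i).
have split_r j : fintype.split (rshift k1 j) = inr j := unsplitK (inr j).
exists (k1 + k2)%N, w, x; split; [|split; [|split]].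
- by move=> z; rewrite /w; case: fintype.split => i; apply: mulr_ge0.
- rewrite big_split_ord (eq_bigr (fun i => l%:num * w1 i)) => [|i _]; last first.
    by rewrite /w split_l.
  rewrite (eq_bigr (fun j => (1 - l%:num) * w2 j)) => [|j _]; last by rewrite /w split_r.
  by rewrite -!mulr_sumr w1_sum1 w2_sum1 !mulr1 /= subrKC.
- by move=> z; rewrite /x; case: fintype.split.
- rewrite convmxE big_split_ord !scaler_sumr; congr (_ + _); apply: eq_bigr => i _.
    by rewrite /w /x split_l scalerA.
  by rewrite /w /x split_r scalerA.
Qed.

Lemma convex_XE_sym u1 u2 :
  convex_set (XE_sym u1 u2 : set (convex_lmodType 'M[R]_(m, m))).
Proof. by apply: convex_setI; [exact: convex_CE|exact: convex_conv_prod_dists]. Qed.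

End ExchangeableConvexity.

(** * Compactness *)

Section Topology.
Variables (R : realType) (T : topologicalType).

Lemma continuous_sum (I : Type) (r : seq I) (F : I -> T -> R) :
  (forall i, continuous (F i)) -> continuous (fun x => \sum_(i <- r) F i x).
Proof. by move=> F_cont; apply: continuous_big => //; exact: add_continuous. Qed.

Lemma continuous_mul (f g : T -> R) :
  continuous f -> continuous g -> continuous (fun x => f x * g x).
Proof. by move=> f_cont g_cont x; apply: continuousM; [exact: f_cont|exact: g_cont]. Qed.

Lemma continuous_mx m n (f : T -> 'M[R]_(m, n)) :
  (forall i j, continuous (fun x => f x i j)) -> continuous f.
Proof.
move=> f_cont x; apply/cvg_mx_entourageP => A entA.
apply: filter_forall => i; apply: filter_forall => j.
have sub_A : xsection A (f x i j) `<=` [set z | (f x i j, z) \in A].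
  by move=> z /xsectionP; exact: mem_set.
exact: filterS sub_A (f_cont i j x _ (nbhs_entourage _ entA)).
Qed.

Lemma closed_forall (I : Type) (P : I -> set T) :
  (forall i, closed (P i)) -> closed [set x | forall i, P i x].
Proof.
move=> P_closed; rewrite (_ : [set x | _] = \bigcap_(i in setT) P i).
  exact: closed_bigI.
by apply/seteqP; split=> x /= Px i //; apply: Px.
Qed.

Lemma closed_le_continuous (f g : T -> R) :
  continuous f -> continuous g -> closed [set x | f x <= g x].
Proof.
move=> f_cont g_cont.
rewrite (_ : [set x | _] = (fun x => g x - f x) @^-1` [set y | 0 <= y]).
  apply: preimage_closed => [x _|]; last exact: closed_ge.
  exact: (continuousB (g_cont x) (f_cont x)).
by apply/seteqP; split=> x /=; rewrite subr_ge0.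
Qed.

Lemma closed_eq_continuous (f g : T -> R) :
  continuous f -> continuous g -> closed [set x | f x = g x].
Proof.
move=> f_cont g_cont; rewrite (_ : [set x | _] =
  [set x | f x <= g x] `&` [set x | g x <= f x]).
  by apply: closedI; exact: closed_le_continuous.
by apply/seteqP; split=> x /=; [move=> ->|case=> *; apply/eqP; rewrite eq_le; apply/andP].
Qed.

Lemma closed_prob_vector m (f : T -> 'cV[R]_m) :
  continuous f -> closed [set x | is_prob_vector (f x)].
Proof.
move=> f_cont.
have coord_cont i : continuous (fun x => f x i ord0).
  move=> x; apply: (@continuous_comp _ _ _ f (fun M => M i ord0)); first exact: f_cont.
  exact: coord_continuous.
apply: closedI.
  apply: (@closed_forall _ (fun i x => 0 <= f x i ord0)) => i.
  by apply: closed_le_continuous; [exact: cst_continuous|exact: coord_cont].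
by apply: closed_eq_continuous; [exact: continuous_sum|exact: cst_continuous].
Qed.

Lemma compact_rV_unit_cube n (A : set 'rV[R]_n) :
  closed A -> (forall v, A v -> forall i, 0 <= v 0 i <= 1) -> compact A.
Proof.
move=> A_closed A01.
have cube_compact :
    compact [set v : 'rV[R]_n | forall i, (`[0, 1]%classic : set R) (v 0 i)].
  by apply: (@rV_compact _ _ (fun=> `[(0 : R), 1]%classic)) => _; exact: segment_compact.
apply: subclosed_compact A_closed cube_compact _ => v /A01 v01 i.
by rewrite /= in_itv /= v01.
Qed.

End Topology.

Lemma closed_CE (R : realType) m (u1 u2 : 'I_m -> 'I_m -> R) : closed (CE u1 u2).
Proof.
have entry_cont i j : continuous (fun pi : 'M[R]_m => pi i j) by exact: coord_continuous.
have lin_cont (c : 'I_m -> R) (ij : 'I_m -> 'I_m * 'I_m) :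
    continuous (fun pi : 'M[R]_m => \sum_z c z * pi (ij z).1 (ij z).2).
  apply: continuous_sum => z.
  by apply: continuous_mul; [exact: cst_continuous|exact: entry_cont].
apply: closedI; [apply: closedI|apply: closedI].
  apply: (@closed_forall _ _ (fun i (pi : 'M[R]_m) => forall j, 0 <= pi i j)) => i.
  apply: (@closed_forall _ _ (fun j (pi : 'M[R]_m) => 0 <= pi i j)) => j.
  by apply: closed_le_continuous; [exact: cst_continuous|exact: entry_cont].
- apply: closed_eq_continuous; last exact: cst_continuous.
  by apply: continuous_sum => i; apply: continuous_sum => j; exact: entry_cont.
- apply: (@closed_forall _ _ (fun s (pi : 'M[R]_m) => forall t,
    \sum_z (u1 t z - u1 s z) * pi s z <= 0)) => s.
  apply: (@closed_forall _ _ (fun t (pi : 'M[R]_m) =>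
    \sum_z (u1 t z - u1 s z) * pi s z <= 0)) => t.
  apply: closed_le_continuous; last exact: cst_continuous.
  exact: (lin_cont _ (fun z => (s, z))).
- apply: (@closed_forall _ _ (fun s (pi : 'M[R]_m) => forall t,
    \sum_z (u2 z t - u2 z s) * pi z s <= 0)) => s.
  apply: (@closed_forall _ _ (fun t (pi : 'M[R]_m) =>
    \sum_z (u2 z t - u2 z s) * pi z s <= 0)) => t.
  apply: closed_le_continuous; last exact: cst_continuous.
  exact: (lin_cont _ (fun z => (z, s))).
Qed.

Lemma prob_vector_entry01 (R : realType) m (x : 'cV[R]_m) i :
  is_prob_vector x -> 0 <= x i ord0 <= 1.
Proof.
move=> [x_ge0 x_sum1]; rewrite x_ge0 -x_sum1 (bigD1 i) //= lerDl.
exact: sumr_ge0.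
Qed.

Section ProductMixtures.
Variables (R : realType) (m : nat).
Local Notation N := (m * m).+1.

Definition mixture_component (v : 'rV[R]_(N * m)) l : 'cV[R]_m :=
  (row l (vec_mx v))^T.

Definition prod_mixture (p : 'rV[R]_N * 'rV[R]_(N * m)) : 'M[R]_m :=
  \sum_l p.1 0 l *: (mixture_component p.2 l *m (mixture_component p.2 l)^T).

Definition mixture_params : set ('rV[R]_N * 'rV[R]_(N * m)) :=
  [set w | is_prob_vector w^T] `*`
  [set v | forall l, is_prob_vector (mixture_component v l)].

Lemma mixture_componentE v l i : mixture_component v l i ord0 = v 0 (mxvec_index l i).
Proof. by rewrite !mxE. Qed.

Lemma conv_prod_dists_image : @conv_prod_dists R m = prod_mixture @` mixture_params.
Proof.
apply/seteqP; split=> M.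
  case/conv_prod_distsP => w [x [w_ge0 [w_sum1 [x_prob ->]]]].
  pose v := mxvec (\matrix_(l, i) x l i ord0).
  have vE l : mixture_component v l = x l.
    by apply/matrixP => i k; rewrite (ord1 k) /mixture_component mxvecK !mxE.
  exists (\row_l w l, v).
    split=> [|l]; last by rewrite /= vE.
    by split=> [l|] /=; rewrite ?mxE //; under eq_bigr do rewrite !mxE.
  by apply: eq_bigr => l _; rewrite /= vE mxE.
case=> -[w v] [[w_ge0 w_sum1] v_prob] <-.
exists N, (fun l => w 0 l), (mixture_component v); do 3?split=> //.
- by move=> l; have := w_ge0 l; rewrite mxE.
- by rewrite -w_sum1; apply: eq_bigr => l _; rewrite mxE.
Qed.

Lemma continuous_mixture_component l : continuous (mixture_component ^~ l).
Proof.
apply: continuous_mx => i k; rewrite (ord1 k).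
rewrite (_ : (fun v : 'rV[R]_(N * m) => _) = fun v => v 0 (mxvec_index l i)).
  exact: coord_continuous.
by apply/funext => v; rewrite mixture_componentE.
Qed.

Lemma compact_mixture_params : compact mixture_params.
Proof.
apply: compact_setX; apply: compact_rV_unit_cube.
- apply: closed_prob_vector; apply: continuous_mx => i j.
  under eq_fun do rewrite mxE; exact: coord_continuous.
- by move=> w w_prob l; have := prob_vector_entry01 l w_prob; rewrite mxE.
- apply: (@closed_forall _ _
    (fun l (v : 'rV[R]_(N * m)) => is_prob_vector (mixture_component v l))) => l.
  exact/closed_prob_vector/continuous_mixture_component.
- move=> v v_prob k; case/mxvec_indexP: k => l i.
  by rewrite -mixture_componentE; apply: prob_vector_entry01.
Qed.

Lemma continuous_prod_mixture : continuous prod_mixture.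
Proof.
have fst_cont : continuous (@fst 'rV[R]_N 'rV[R]_(N * m)).
  by case=> w v; exact: cvg_fst.
have snd_cont : continuous (@snd 'rV[R]_N 'rV[R]_(N * m)).
  by case=> w v; exact: cvg_snd.
have w_cont l : continuous (fun p : 'rV[R]_N * 'rV[R]_(N * m) => p.1 0 l).
  by move=> p; exact: (continuous_comp (fst_cont p) (@coord_continuous _ 1 N 0 l p.1)).
have v_cont k : continuous (fun p : 'rV[R]_N * 'rV[R]_(N * m) => p.2 0 k).
  by move=> p; exact: (continuous_comp (snd_cont p) (@coord_continuous _ 1 _ 0 k p.2)).
apply: continuous_mx => i j.
rewrite (_ : (fun p : 'rV[R]_N * 'rV[R]_(N * m) => _) = fun p => \sum_l p.1 0 l *
    (p.2 0 (mxvec_index l i) * p.2 0 (mxvec_index l j))).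
  apply: continuous_sum => l.
  by apply: continuous_mul; [exact: w_cont|apply: continuous_mul; exact: v_cont].
apply/funext => p; rewrite /prod_mixture summxE; apply: eq_bigr => l _.
by rewrite !mxE big_ord1 !mxE.
Qed.

Lemma compact_conv_prod_dists : compact (@conv_prod_dists R m).
Proof.
rewrite conv_prod_dists_image; apply: continuous_compact compact_mixture_params.
exact/continuous_subspaceT/continuous_prod_mixture.
Qed.

Lemma compact_XE_sym (u1 u2 : 'I_m -> 'I_m -> R) : compact (XE_sym u1 u2).
Proof.
rewrite /XE_sym setIC; apply: compact_closedI compact_conv_prod_dists _.
exact: closed_CE.
Qed.

End ProductMixtures.

(** * Semialgebraicity *)

Section Definability.
Variables (R : realType) (I : finType).

Definition env_of (v : I -> R) : seq R := [seq v i | i <- enum I].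

Definition sa_var (n : nat) : rpoly R I :=
  nth (PConst I 0) [seq PVar R i | i <- enum I] n.

Definition sa_sub (p q : rpoly R I) : rpoly R I := PAdd p (PMul (PConst I (-1)) q).

(* [Inv] and [Unit] never occur in the ring formulas that quantifier
   elimination produces, so they are translated arbitrarily. *)
Fixpoint rpoly_of_term (t : GRing.term R) : rpoly R I :=
  match t with
  | GRing.Var n => sa_var n
  | GRing.Const c => PConst I c
  | GRing.NatConst n => PConst I n%:R
  | GRing.Add a b => PAdd (rpoly_of_term a) (rpoly_of_term b)
  | GRing.Opp a => PMul (PConst I (-1)) (rpoly_of_term a)
  | GRing.NatMul a n => PMul (rpoly_of_term a) (PConst I n%:R)
  | GRing.Mul a b => PMul (rpoly_of_term a) (rpoly_of_term b)
  | GRing.Inv _ => PConst I 0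
  | GRing.Exp a n => iter n (PMul (rpoly_of_term a)) (PConst I 1)
  end.

Fixpoint sa_of_formula (f : ord.formula R) : sa_formula R I :=
  match f with
  | ord.Bool b => if b then SAeq0 (PConst I 0) else SAgt0 (PConst I 0)
  | ord.Equal a b => SAeq0 (sa_sub (rpoly_of_term a) (rpoly_of_term b))
  | ord.Lt a b => SAgt0 (sa_sub (rpoly_of_term b) (rpoly_of_term a))
  | ord.Le a b => SAnot (SAgt0 (sa_sub (rpoly_of_term a) (rpoly_of_term b)))
  | ord.And f g => SAand (sa_of_formula f) (sa_of_formula g)
  | ord.Or f g => SAor (sa_of_formula f) (sa_of_formula g)
  | ord.Implies f g => SAor (SAnot (sa_of_formula f)) (sa_of_formula g)
  | ord.Not f => SAnot (sa_of_formula f)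
  | _ => SAeq0 (PConst I 0)
  end.

Variable v : I -> R.

Lemma sa_varE n : rpoly_eval (sa_var n) v = nth 0 (env_of v) n.
Proof. by rewrite /sa_var /env_of; elim: (enum I) n => [|i s IHs] [|n] //=. Qed.

Lemma rpoly_of_termE t :
  GRing.rterm t -> rpoly_eval (rpoly_of_term t) v = GRing.eval (env_of v) t.
Proof.
elim: t => //=.
- by move=> n _; exact: sa_varE.
- by move=> a IHa b IHb /andP[/IHa -> /IHb ->].
- by move=> a IHa /IHa ->; rewrite mulN1r.
- by move=> a IHa n /IHa ->; rewrite mulr_natr.
- by move=> a IHa b IHb /andP[/IHa -> /IHb ->].
- move=> a IHa n /IHa eval_a; elim: n => [|n IHn] /=; first by rewrite expr0.
  by rewrite IHn eval_a exprS.
Qed.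

Lemma sa_of_formulaE f : ord.qf_form f -> ord.rformula f ->
  sa_holds (sa_of_formula f) v <-> ord.qf_eval (env_of v) f.
Proof.
elim: f => //=.
- by case; rewrite /= ?ltxx.
- move=> a b _ /andP[ra rb]; rewrite mulN1r !rpoly_of_termE //.
  by split=> [/eqP|/eqP->]; rewrite ?subr_eq0 ?subrr.
- move=> a b _ /andP[ra rb]; rewrite mulN1r !rpoly_of_termE // subr_gt0.
  by split.
- move=> a b _ /andP[ra rb]; rewrite mulN1r !rpoly_of_termE // subr_gt0.
  by rewrite leNgt; split=> /negP.
- move=> f IHf g IHg /andP[qf qg] /andP[rf rg]; rewrite IHf // IHg //.
  by split=> [[-> ->]|/andP].
- move=> f IHf g IHg /andP[qf qg] /andP[rf rg]; rewrite IHf // IHg //.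
  by split=> [[|]->|/orP]; rewrite ?orbT.
- move=> f IHf g IHg /andP[qf qg] /andP[rf rg]; rewrite IHf // IHg //.
  by case: (ord.qf_eval _ f); case: (ord.qf_eval _ g); split=> [[nf|]|] //=;
    by [left|right|case: nf].
- move=> f IHf qf rf; rewrite IHf //.
  by case: (ord.qf_eval _ f); split.
Qed.

End Definability.

Lemma ord_formula_definable (R : realType) (I : finType) (f : ord.formula R) :
  exists g : sa_formula R I, forall v, sa_holds g v <-> ord.holds (env_of v) f.
Proof.
pose qf := ord.quantifier_elim (@wproj R) (ord.to_rform f).
have /andP[qf_qf qf_r] : ord.qf_form qf && ord.rformula qf.
  exact: (ord.quantifier_elim_wf (@wf_QE_wproj R) (ord.to_rform_rformula f)).
exists (sa_of_formula I qf) => v; rewrite sa_of_formulaE //.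
have := rcf_satP (env_of v) f; rewrite /rcf_sat /ord.proj_sat -/qf.
by case; split.
Qed.

Definition mx_env (R : realType) m n (M : 'M[R]_(m, n)) : seq R :=
  env_of (fun ij : 'I_m * 'I_n => M ij.1 ij.2).

Lemma semialgebraic_ord_formula (R : realType) m n (S : set 'M[R]_(m, n))
    (f : ord.formula R) :
  (forall M, S M <-> ord.holds (mx_env M) f) -> semialgebraic S.
Proof.
move=> S_f; have [g g_f] := ord_formula_definable ('I_m * 'I_n)%type f.
by exists g; apply/seteqP; split=> M /=; [move/S_f/g_f|move/g_f/S_f].
Qed.

Section FormulaBuilders.
Variable R : realType.

Definition term_sum (T : finType) (F : T -> GRing.term R) : GRing.term R :=
  \big[GRing.Add/GRing.Const 0]_(i : T) F i.

Definition formula_all (T : finType) (F : T -> ord.formula R) : ord.formula R :=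
  \big[ord.And/ord.Bool true]_(i : T) F i.

Definition exists_vars (a k : nat) (body : ord.formula R) : ord.formula R :=
  foldr ord.Exists body (iota a k).

Lemma eval_term_sum e (T : finType) (F : T -> GRing.term R) :
  GRing.eval e (term_sum F) = \sum_i GRing.eval e (F i).
Proof. exact: (big_morph (GRing.eval e) (fun _ _ => erefl) erefl). Qed.

Lemma holds_formula_all e (T : finType) (F : T -> ord.formula R) :
  ord.holds e (formula_all F) <-> forall i, ord.holds e (F i).
Proof.
suff holds_seq s : ord.holds e (\big[ord.And/ord.Bool true]_(i <- s) F i) <->
    forall i, i \in s -> ord.holds e (F i).
  by rewrite /formula_all holds_seq; split=> Fs i //; apply: Fs; exact: mem_index_enum.
elim: s => [|j s IHs]; first by rewrite big_nil.
rewrite big_cons /= IHs; split=> [[Fj Fs] i|Fs].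
  by rewrite inE => /predU1P[->|/Fs].
by split=> [|i s_i]; apply: Fs; rewrite inE ?eqxx ?s_i ?orbT.
Qed.

Lemma holds_formula_all2 e (T U : finType) (F : T -> U -> ord.formula R) :
  ord.holds e (formula_all (fun i => formula_all (F i))) <->
  forall i j, ord.holds e (F i j).
Proof.
rewrite holds_formula_all.
by split=> F_holds i; [apply/holds_formula_all|apply/holds_formula_all/F_holds].
Qed.

Lemma holds_exists_vars e k body :
  ord.holds e (exists_vars (size e) k body) <->
  exists2 y, size y = k & ord.holds (e ++ y) body.
Proof.
elim: k e => [|k IHk] e /=.
  by split=> [body_e|[[|//] _]]; [exists [::]; rewrite ?cats0|rewrite cats0].
have set_nth_size x : set_nth 0 e (size e) x = rcons e x.
  by rewrite set_nthE ltnn subnn cats1.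
split=> [[x]|[[//|x y] [size_y] body_y]].
  rewrite set_nth_size -(size_rcons e x) IHk => -[y size_y body_y].
  by exists (x :: y); rewrite /= ?size_y // -cat_rcons.
exists x; rewrite set_nth_size -(size_rcons e x) IHk.
by exists y; rewrite // cat_rcons.
Qed.

End FormulaBuilders.

Section ExchangeableFormula.
Variables (R : realType) (m : nat) (u1 u2 : 'I_m -> 'I_m -> R).
Local Notation N := (m * m).+1.
Local Notation n_entries := #|{: 'I_m * 'I_m}|.

(* Free variable [enum_rank (i, j)] stands for the entry M i j; after these
   come the existentially quantified mixture parameters, the weight of
   component l at [inl l] and its i-th coordinate at [inr (l, i)]. *)
Definition mixture_index := ('I_N + 'I_N * 'I_m)%type.

Definition entry_term (i j : 'I_m) : GRing.term R := GRing.Var R (enum_rank (i, j)).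

Definition param_term (k : mixture_index) : GRing.term R :=
  GRing.Var R (n_entries + enum_rank k).

Lemma size_mx_env (M : 'M[R]_m) : size (mx_env M) = n_entries.
Proof. by rewrite size_map -cardE. Qed.

Lemma nth_mx_env (M : 'M[R]_m) y i j : nth 0 (mx_env M ++ y) (enum_rank (i, j)) = M i j.
Proof.
rewrite nth_cat size_mx_env ltn_ord.
by rewrite (nth_map (i, j)) -?cardE ?ltn_ord // nth_enum_rank.
Qed.

Lemma nth_param (M : 'M[R]_m) y (k : mixture_index) :
  nth 0 (mx_env M ++ y) (n_entries + enum_rank k) = nth 0 y (enum_rank k).
Proof. by rewrite nth_cat size_mx_env ltnNge leq_addr /= addKn. Qed.

Definition incentive_formula (c : 'I_m -> R) (s : 'I_m -> 'I_m * 'I_m) :=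
  ord.Le (term_sum (fun z => GRing.Mul (GRing.Const (c z))
                               (entry_term (s z).1 (s z).2))) (GRing.Const 0).

Lemma holds_incentive (M : 'M[R]_m) y c s :
  ord.holds (mx_env M ++ y) (incentive_formula c s) <->
  \sum_z c z * M (s z).1 (s z).2 <= 0.
Proof.
rewrite /= eval_term_sum (eq_bigr (fun z => c z * M (s z).1 (s z).2)) // => z _.
by rewrite /= nth_mx_env.
Qed.

Lemma eval_entries_sum (M : 'M[R]_m) y :
  GRing.eval (mx_env M ++ y) (term_sum (fun i => term_sum (entry_term i))) =
  \sum_i \sum_j M i j.
Proof.
rewrite eval_term_sum; apply: eq_bigr => i _.
by rewrite eval_term_sum; apply: eq_bigr => j _; rewrite /= nth_mx_env.
Qed.

Definition ce_formula : ord.formula R :=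
  ord.And (ord.And
    (formula_all (fun i => formula_all (fun j =>
       ord.Le (GRing.Const 0) (entry_term i j))))
    (ord.Equal (term_sum (fun i => term_sum (entry_term i))) (GRing.Const 1)))
  (ord.And
    (formula_all (fun s => formula_all (fun t =>
       incentive_formula (fun z => u1 t z - u1 s z) (fun z => (s, z)))))
    (formula_all (fun s => formula_all (fun t =>
       incentive_formula (fun z => u2 z t - u2 z s) (fun z => (z, s)))))).

Lemma ce_formulaP (M : 'M[R]_m) :
  ord.holds (mx_env M) ce_formula <-> correlated_equilibrium u1 u2 M.
Proof.
rewrite -[mx_env M]cats0; split.
  case=> -[/holds_formula_all2 M_ge0 /= M_sum1].
  case=> /holds_formula_all2 ce1 /holds_formula_all2 ce2.
  split; [split|split] => [i j||s t|s t].
  - by have := M_ge0 i j; rewrite /= nth_mx_env.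
  - by rewrite -(eval_entries_sum M [::]).
  - by have /holds_incentive := ce1 s t.
  - by have /holds_incentive := ce2 s t.
case=> -[M_ge0 M_sum1] [ce1 ce2].
split; split; try apply/holds_formula_all2.
- by move=> i j; rewrite /= nth_mx_env.
- by rewrite /= eval_entries_sum.
- by move=> s t; apply/(holds_incentive _ _ _ (fun z => (s, z)))/ce1.
- by move=> s t; apply/(holds_incentive _ _ _ (fun z => (z, s)))/ce2.
Qed.

Definition param_weight (y : seq R) l : R :=
  nth 0 y (enum_rank (inl l : mixture_index)).

Definition param_point (y : seq R) l : 'cV[R]_m :=
  \col_i nth 0 y (enum_rank (inr (l, i) : mixture_index)).

Definition weight_term l := param_term (inl l).
Definition coord_term l i := param_term (inr (l, i)).

Definition weights_formula : ord.formula R :=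
  ord.And (formula_all (fun l => ord.Le (GRing.Const 0) (weight_term l)))
          (ord.Equal (term_sum weight_term) (GRing.Const 1)).

Definition points_formula : ord.formula R :=
  ord.And (formula_all (fun l => formula_all (fun i =>
             ord.Le (GRing.Const 0) (coord_term l i))))
          (formula_all (fun l => ord.Equal (term_sum (coord_term l)) (GRing.Const 1))).

Definition entries_formula : ord.formula R :=
  formula_all (fun i => formula_all (fun j => ord.Equal (entry_term i j)
    (term_sum (fun l => GRing.Mul (weight_term l)
                          (GRing.Mul (coord_term l i) (coord_term l j)))))).

Definition mixture_body : ord.formula R :=
  ord.And weights_formula (ord.And points_formula entries_formula).

Section MixtureBody.
Variables (M : 'M[R]_m) (y : seq R).
Local Notation e := (mx_env M ++ y).

Lemma holds_weights_formula : ord.holds e weights_formula <->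
  (forall l, 0 <= param_weight y l) /\ \sum_l param_weight y l = 1.
Proof.
have sumE : GRing.eval e (term_sum weight_term) = \sum_l param_weight y l.
  by rewrite eval_term_sum; apply: eq_bigr => l _; rewrite /= nth_param.
rewrite /= holds_formula_all sumE.
by split=> -[w_ge0 ->]; split=> // l; move: (w_ge0 l); rewrite /= nth_param.
Qed.

Lemma holds_points_formula : ord.holds e points_formula <->
  forall l, is_prob_vector (param_point y l).
Proof.
have sumE l : GRing.eval e (term_sum (coord_term l)) = \sum_i param_point y l i ord0.
  by rewrite eval_term_sum; apply: eq_bigr => i _; rewrite /= nth_param mxE.
rewrite /= holds_formula_all2 holds_formula_all.
split=> [[x_ge0 x_sum1] l|x_prob].
  split=> [i|]; last by rewrite -sumE; exact: x_sum1.
  by move: (x_ge0 l i); rewrite /= nth_param mxE.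
split=> [l i|l]; last by rewrite /= sumE; case: (x_prob l).
by rewrite /= nth_param; case: (x_prob l) => /(_ i); rewrite mxE.
Qed.

Lemma holds_entries_formula : ord.holds e entries_formula <->
  M = \sum_l param_weight y l *: (param_point y l *m (param_point y l)^T).
Proof.
pose x l i := nth 0 y (enum_rank (inr (l, i) : mixture_index)).
have entryE i j :
    (\sum_l param_weight y l *: (param_point y l *m (param_point y l)^T)) i j =
    \sum_l param_weight y l * (x l i * x l j).
  by rewrite summxE; apply: eq_bigr => l _; rewrite !mxE big_ord1 !mxE.
have termE i j : GRing.eval e (term_sum (fun l => GRing.Mul (weight_term l)
      (GRing.Mul (coord_term l i) (coord_term l j)))) =
    \sum_l param_weight y l * (x l i * x l j).
  by rewrite eval_term_sum; apply: eq_bigr => l _; rewrite /= !nth_param.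
rewrite holds_formula_all2; split=> M_eq; last first.
  by move=> i j; rewrite /= nth_mx_env termE M_eq entryE.
by apply/matrixP => i j; rewrite entryE; have := M_eq i j; rewrite /= nth_mx_env termE.
Qed.

Lemma mixture_bodyP : ord.holds e mixture_body <->
  is_prod_dists_comb (param_weight y) (param_point y) M.
Proof.
split=> [[/holds_weights_formula[w_ge0 w_sum1]]|[w_ge0 [w_sum1 [x_prob M_eq]]]].
  by case=> /holds_points_formula x_prob /holds_entries_formula M_eq.
split; first exact/holds_weights_formula.
by split; [exact/holds_points_formula|exact/holds_entries_formula].
Qed.

End MixtureBody.

Definition conv_prod_formula : ord.formula R :=
  exists_vars n_entries #|{: mixture_index}| mixture_body.

Lemma conv_prod_formulaP (M : 'M[R]_m) :
  ord.holds (mx_env M) conv_prod_formula <-> conv_prod_dists M.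
Proof.
rewrite /conv_prod_formula -(size_mx_env M) holds_exists_vars conv_prod_distsP.
split=> [[y _ /mixture_bodyP comb]|[w [x comb]]].
  by exists (param_weight y), (param_point y).
pose val (k : mixture_index) := match k with inl l => w l | inr (l, i) => x l i ord0 end.
pose y := [seq val k | k <- enum {: mixture_index}].
have nth_y k : nth 0 y (enum_rank k) = val k.
  by rewrite (nth_map k) ?nth_enum_rank // -cardE ltn_ord.
exists y; first by rewrite size_map -cardE.
apply/mixture_bodyP.
have -> : param_weight y = w by apply/funext => l; rewrite /param_weight nth_y.
have -> : param_point y = x.
  by apply/funext => l; apply/matrixP => i k; rewrite (ord1 k) mxE nth_y.
exact: comb.
Qed.

Lemma semialgebraic_XE_sym : semialgebraic (XE_sym u1 u2).
Proof.
apply: (semialgebraic_ord_formula (f := ord.And ce_formula conv_prod_formula)) => M.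
split=> -[ce cp]; first by split; [apply/ce_formulaP|apply/conv_prod_formulaP].
by split; [apply/ce_formulaP|apply/conv_prod_formulaP].
Qed.

End ExchangeableFormula.

Theorem proposition3p2 (R : realType) (m : nat) (u1 u2 : 'I_m -> 'I_m -> R) :
  (2 <= m)%N ->
  symmetric_game u1 u2 ->
  [/\ compact (XE_sym u1 u2),
      convex_set (XE_sym u1 u2 : set (convex_lmodType 'M[R]_(m, m)))
    & semialgebraic (XE_sym u1 u2)].
Proof.
move=> _ _; split; [exact: compact_XE_sym|exact: convex_XE_sym|].
exact: semialgebraic_XE_sym.
Qed.
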